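(* Let $R=\Bbbk[x_1,\dots,x_n]$ be a polynomial ring over a field $\Bbbk$, and let $I$ and $J$ be monomial ideals of $R$ such that every element of $G(I)$ has degree $d_1$ and every element of $G(J)$ has degree $d_2$. Let $k>1$ be an integer and let $m=\max\{i \mid x_i \text{ divides a minimal monomial generator of } I\}$. Suppose that $(x_1^{k-1},\dots,x_m^{k-1})\subseteq J$. Then the ordered pair $(I^{[k]},J)$ is conjoined.
   Context: All ideals are monomial ideals in $R$. For a monomial ideal $I$, $G(I)$ denotes its unique minimal set of monomial generators. $I^{[k]}$ is the ideal generated by $\{u^k : u\in G(I)\}$. An ordered pair $(I,J)$ of monomial ideals of $R$ is called conjoined if (i) $|G(IJ)|=|G(I)|\cdot|G(J)|$, and (ii) there is a minimal presentation $R^s\xrightarrow{\phi}R^t\xrightarrow{\psi}I\to 0$ of $I$ such that all entries of the matrix of $\phi$ belong to $J$. *)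

From mathcomp Require Import all_boot all_algebra.
From mathcomp Require Import mpoly.
Set Implicit Arguments. Unset Strict Implicit. Unset Printing Implicit Defensive.
Import GRing.Theory.
Local Open Scope ring_scope.

Section MonomialIdeals.
Variables (K : fieldType) (n : nat).
Local Notation R := {mpoly K[n]}.
Local Notation mon := 'X_{1..n}.

Definition ideal_pred := R -> Prop.

Definition mdivides (u v : mon) : bool := [forall i, u i <= v i]%N.

Definition monP (u : mon) : R := 'X_[u].

(** A monomial ideal is given by a finite list S of monomial generators;
    the ideal it denotes: all R-linear combinations of the x^u, u in S. *)
Definition mideal (S : seq mon) : ideal_pred :=
  fun p => exists c : 'I_(size S) -> R,
      p = \sum_(i < size S) c i * monP (nth 0%MM S i).

Definition Gmin (S : seq mon) : seq mon :=
  undup [seq u <- S | ~~ has (fun v => mdivides v u && (v != u)) S].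

Definition mprod (S T : seq mon) : seq mon :=
  [seq mnm_add u v | u <- S, v <- T].

(** I^[k] : generated by u^k for u in G(I). *)
Definition mfrob (k : nat) (S : seq mon) : seq mon :=
  [seq mnm_muln u k | u <- Gmin S].

(** Free presentations  R^s --A--> R^t --g--> I --> 0.
    psi sends the i-th basis vector of R^t to g 0 i; phi is the t x s matrix A. *)
Definition psi_onto (I : ideal_pred) t (g : 'rV[R]_t) : Prop :=
  forall p, I p <-> exists v : 'cV[R]_t, p = (g *m v) 0 0.

Definition image_is_kernel t s (g : 'rV[R]_t) (A : 'M[R]_(t, s)) : Prop :=
  forall v : 'cV[R]_t, g *m v = 0 <-> exists w : 'cV[R]_s, v = A *m w.

Definition presentation (I : ideal_pred) t s (g : 'rV[R]_t) (A : 'M[R]_(t, s)) :=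
  psi_onto I g /\ image_is_kernel g A.

Definition minimal_presentation (I : ideal_pred) t s (g : 'rV[R]_t)
    (A : 'M[R]_(t, s)) :=
  [/\ presentation I g A,
      (forall t' (g' : 'rV[R]_t'), psi_onto I g' -> (t <= t')%N) &
      (forall s' (A' : 'M[R]_(t, s')), image_is_kernel g A' -> (s <= s')%N)].

Definition conjoined (S T : seq mon) : Prop :=
  size (Gmin (mprod S T)) = (size (Gmin S) * size (Gmin T))%N /\
  exists t s (g : 'rV[R]_t) (A : 'M[R]_(t, s)),
    minimal_presentation (mideal S) g A /\
    forall i j, mideal T (A i j).

End MonomialIdeals.

(* The minimal generators of I^[k] are the powers u^k, u in G(I): an antichain of
   monomials of one degree.  Unless G(I) = {1}, J contains some x_j^(k-1), so its
   generators have degree d2 <= k-1 and every v in G(J) has all exponents < k; then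
   u^k v determines u and v by division with remainder, which gives
   |G(I^[k] J)| = |G(I^[k])| |G(J)|.
   For the presentation, take the Taylor syzygies
   (lcm(w_a, w_b) / w_a) e_a - (lcm(w_a, w_b) / w_b) e_b of the generators w_a.
   They are multihomogeneous, so any subfamily none of whose members lies in the
   span of the others is a minimal generating set of the syzygies (a graded
   Nakayama argument: a change of generators reduces to an invertible matrix over
   the field modulo the variables).  If u^k != v^k then some x_j divides v and has
   exponent at least k in lcm(u^k, v^k) / u^k, so every syzygy coefficient lies in
   (x_1^(k-1), ..., x_m^(k-1)), which is contained in J. *)

From mathcomp Require Import all_boot all_algebra.
From mathcomp Require Import mpoly.
From mathcomp Require Import zify.
From Stdlib Require Import Classical.
Import GRing.Theory.
Local Open Scope ring_scope.

Set Implicit Arguments. Unset Strict Implicit. Unset Printing Implicit Defensive.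

Section Monomials.
Variable n : nat.
Implicit Types u v w : 'X_{1..n}.

Lemma mdeg_lem u v : (u <= v)%MM -> (mdeg u <= mdeg v)%N.
Proof. by move=> uv; rewrite -(submK uv) mdegD leq_addl. Qed.

Lemma lem_mdeg_eq u v : (u <= v)%MM -> mdeg u = mdeg v -> u = v.
Proof.
move=> uv; rewrite -(submK uv) mdegD => /eqP.
by rewrite -{1}[mdeg u]add0n eqn_add2r eq_sym mdeg_eq0 => /eqP ->; rewrite add0m.
Qed.

Lemma lem_anti u v : (u <= v)%MM -> (v <= u)%MM -> u = v.
Proof. by move=> uv vu; apply/(lem_mdeg_eq uv)/anti_leq; rewrite !mdeg_lem. Qed.

Lemma mnm_le_mdeg v (i : 'I_n) : (v i <= mdeg v)%N.
Proof. by rewrite mdegE (bigD1 i) //= leq_addr. Qed.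

Lemma mnm_neq0P u : u != 0%MM -> exists i, (0 < u i)%N.
Proof.
move=> nz; have [i ui|u0] := pickP (fun i => 0 < u i)%N; first by exists i.
by case/eqP: nz; apply/mnmP => i; rewrite mnm0E; apply/eqP; rewrite -leqn0 leqNgt u0.
Qed.

Lemma lem_add2l w u v : (u <= v)%MM -> (w + u <= w + v)%MM.
Proof. by move=> /mnm_lepP uv; apply/mnm_lepP => i; rewrite !mnmDE leq_add2l. Qed.

Lemma submm u : (u - u)%MM = 0%MM.
Proof. by apply/mnmP => i; rewrite mnmBE mnm0E subnn. Qed.

Lemma addmKl u v : ((u + v) - u)%MM = v.
Proof. by rewrite addmC addmK. Qed.

Lemma submDsub u v w : (u <= v)%MM -> (v <= w)%MM -> ((v - u) + (w - v))%MM = (w - u)%MM.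
Proof.
move=> /mnm_lepP uv /mnm_lepP vw; apply/mnmP => i.
by rewrite !(mnmDE, mnmBE); have := uv i; have := vw i; lia.
Qed.

End Monomials.

Section MonomialPolynomials.
Variables (K : fieldType) (n : nat).
Local Notation R := {mpoly K[n]}.
Implicit Types u v : 'X_{1..n}.

Lemma mcoeffXM u v (p : R) :
  ('X_[u] * p)@_v = if (u <= v)%MM then p@_(v - u)%MM else 0.
Proof.
case: ifP => uv; first by rewrite -{1}(submK uv) addmC -commr_mpolyX mcoeffMX.
apply/eqP; rewrite mcoeff_eq0 -commr_mpolyX (perm_mem (msuppMX p u)).
by apply/mapP => -[v' _ ev]; rewrite ev lem_addr in uv.
Qed.

Lemma mpolyX_neq0 u : ('X_[u] : R) != 0.
Proof. by rewrite -msupp_eq0 msuppX. Qed.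

Lemma mulXI u (p q : R) : 'X_[u] * p = 'X_[u] * q -> p = q.
Proof. exact/mulfI/mpolyX_neq0. Qed.

Lemma mulX_subm u v : (u <= v)%MM -> 'X_[u] * 'X_[v - u] = 'X_[v] :> R.
Proof. by move=> uv; rewrite -mpolyXD addmC submK. Qed.

End MonomialPolynomials.

Section MinimalGenerators.
Variable n : nat.
Implicit Types (S : seq 'X_{1..n}) (u v w : 'X_{1..n}).

Lemma mem_Gmin S u :
  (u \in Gmin S) = (u \in S) && ~~ has (fun v => (v <= u)%MM && (v != u)) S.
Proof. by rewrite /Gmin mem_undup mem_filter andbC. Qed.

Lemma Gmin_uniq S : uniq (Gmin S).
Proof. exact: undup_uniq. Qed.

Lemma Gmin_sub S u : u \in Gmin S -> u \in S.
Proof. by rewrite mem_Gmin => /andP[]. Qed.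

Lemma Gmin_anti S u v : u \in Gmin S -> v \in Gmin S -> (u <= v)%MM -> u = v.
Proof.
move=> /Gmin_sub Su; rewrite mem_Gmin => /andP[_ /hasPn minv] uv.
by apply/eqP; move: (minv u Su); rewrite uv negbK.
Qed.

Lemma Gmin_cover S u : u \in S -> exists2 v, v \in Gmin S & (v <= u)%MM.
Proof.
move=> Su; have ex_deg : exists d, has (fun v => (v <= u)%MM && (mdeg v == d)) S.
  by exists (mdeg u); apply/hasP; exists u; rewrite ?lepm_refl ?eqxx.
case: (ex_minnP ex_deg) => _ /hasP[v Sv /andP[vu /eqP <-]] min_deg.
exists v => //; rewrite mem_Gmin Sv; apply/hasPn => w Sw; apply/negP => /andP[wv].
have /min_deg vw : has (fun x => (x <= u)%MM && (mdeg x == mdeg w)) S.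
  by apply/hasP; exists w; rewrite ?eqxx ?(lepm_trans wv vu).
by rewrite (lem_mdeg_eq wv) ?eqxx //; apply/anti_leq; rewrite vw mdeg_lem.
Qed.

Lemma Gmin_id S : uniq S -> {in S &, forall u v, (u <= v)%MM -> u = v} -> Gmin S = S.
Proof.
move=> Suniq Santi; rewrite /Gmin (undup_id (filter_uniq _ Suniq)).
apply/all_filterP/allP => u Su; apply/hasPn => v Sv; apply/negP => /andP[vu].
by rewrite (Santi _ _ Sv Su vu) eqxx.
Qed.

End MinimalGenerators.

Section MonomialIdeals.
Variables (K : fieldType) (n : nat).
Local Notation R := {mpoly K[n]}.
Implicit Types (S : seq 'X_{1..n}) (u v : 'X_{1..n}) (p q : R).

Lemma mideal0 S : mideal S (0 : R).
Proof. by exists (fun=> 0); rewrite big1 // => i _; rewrite mul0r. Qed.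

Lemma midealB S p q : mideal S p -> mideal S q -> mideal S (p - q).
Proof.
move=> [c ->] [d ->]; exists (fun i => c i - d i).
by rewrite -sumrB; apply: eq_bigr => i _; rewrite mulrBl.
Qed.

Lemma midealMl S p q : mideal S p -> mideal S (q * p).
Proof.
move=> [c ->]; exists (fun i => q * c i).
by rewrite mulr_sumr; apply: eq_bigr => i _; rewrite mulrA.
Qed.

Lemma mideal_mpolyX S u : mideal S ('X_[u] : R) -> exists2 v, v \in S & (v <= u)%MM.
Proof.
move=> [c cE]; apply/hasP/negPn/negP => /hasPn noDiv.
have := congr1 (mcoeff u) cE; rewrite mcoeffX eqxx raddf_sum /= big1 => [/eqP|i _].
  by rewrite oner_eq0.
by rewrite /monP mulrC mcoeffXM (negbTE (noDiv _ (mem_nth 0%MM (ltn_ord i)))).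
Qed.

Lemma mideal_lem S u v : mideal S ('X_[u] : R) -> (u <= v)%MM -> mideal S ('X_[v] : R).
Proof. by move=> Su uv; rewrite -(submK uv) mpolyXD; apply: midealMl. Qed.

End MonomialIdeals.

Section ProductGenerators.
Variables (n : nat) (S T : seq 'X_{1..n}) (d1 d2 : nat).
Hypothesis degS : forall u, u \in Gmin S -> mdeg u = d1.
Hypothesis degT : forall v, v \in Gmin T -> mdeg v = d2.

Lemma mem_mprod (S' T' : seq 'X_{1..n}) u v :
  u \in S' -> v \in T' -> (u + v)%MM \in mprod S' T'.
Proof. by move=> Su Tv; apply/allpairsP; exists (u, v). Qed.

Lemma mprod_cover x : x \in mprod S T ->
  exists2 y, y \in mprod (Gmin S) (Gmin T) & (y <= x)%MM.
Proof.
case/allpairsP => -[u v] /= [Su Tv ->].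
have [u' Gu' u'u] := Gmin_cover Su; have [v' Gv' v'v] := Gmin_cover Tv.
exists (u' + v')%MM; first exact: mem_mprod.
by apply: lepm_trans (lem_add2l _ v'v); rewrite addmC [(u + _)%MM]addmC lem_add2l.
Qed.

Lemma mdeg_mprod_Gmin y : y \in mprod (Gmin S) (Gmin T) -> mdeg y = (d1 + d2)%N.
Proof. by case/allpairsP => -[u v] /= [Gu Gv ->]; rewrite mdegD degS ?degT. Qed.

Lemma mprod_Gmin_sub y : y \in mprod (Gmin S) (Gmin T) -> y \in mprod S T.
Proof. by case/allpairsP => -[u v] /= [/Gmin_sub Su /Gmin_sub Tv ->]; apply: mem_mprod. Qed.

Lemma mem_Gmin_mprod x : (x \in Gmin (mprod S T)) = (x \in mprod (Gmin S) (Gmin T)).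
Proof.
apply/idP/idP => [|Gx].
  rewrite mem_Gmin => /andP[/mprod_cover[y Gy yx] /hasPn minx].
  suff <- : y = x by [].
  by apply/eqP; move: (minx y (mprod_Gmin_sub Gy)); rewrite yx negbK.
rewrite mem_Gmin mprod_Gmin_sub //; apply/hasPn => y /mprod_cover[z Gz zy].
apply/negP => /andP[yx]; have zx : z = x.
  by apply: lem_mdeg_eq (lepm_trans zy yx) _; rewrite !mdeg_mprod_Gmin.
by rewrite (lem_anti yx) ?eqxx // -zx.
Qed.

Hypothesis sum_inj : forall u1 u2 v1 v2, u1 \in Gmin S -> u2 \in Gmin S ->
  v1 \in Gmin T -> v2 \in Gmin T -> (u1 + v1 = u2 + v2)%MM -> u1 = u2 /\ v1 = v2.

Lemma size_Gmin_mprod : size (Gmin (mprod S T)) = (size (Gmin S) * size (Gmin T))%N.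
Proof.
rewrite -(size_allpairs (fun u v => (u + v)%MM)); apply/perm_size/uniq_perm.
- exact: Gmin_uniq.
- apply: allpairs_uniq; try exact: Gmin_uniq.
  move=> [u1 v1] [u2 v2] /allpairsP[[? ?] /= [Gu1 Gv1 [-> ->]]].
  move=> /allpairsP[[? ?] /= [Gu2 Gv2 [-> ->]]] /= /sum_inj.
  by case=> // -> ->.
- exact: mem_Gmin_mprod.
Qed.

End ProductGenerators.

Section MinimalColumns.
Variables (K : fieldType) (n : nat).
Local Notation R := {mpoly K[n]}.
Local Notation mon := 'X_{1..n}.

Definition colspan t s (A : 'M[R]_(t, s)) (v : 'cV[R]_t) := exists d, v = A *m d.

Definition ker_in_maxideal t s (B : 'M[R]_(t, s)) :=
  forall c : 'cV[R]_s, B *m c = 0 -> forall j, (c j 0)@_0 = 0.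

Definition mx_graded t s (rdeg : 'I_t -> mon) (cdeg : 'I_s -> mon) (B : 'M[R]_(t, s)) :=
  exists mu : 'I_t -> 'I_s -> K, forall i j, 'X_[rdeg i] * B i j = mu i j *: 'X_[cdeg j].

Definition mx_irredundant t s (B : 'M[R]_(t, s)) :=
  forall j (d : 'cV[R]_s), d j 0 = 0 -> col j B <> B *m d.

Lemma colspan_col t s (A : 'M[R]_(t, s)) j : colspan A (col j A).
Proof. by exists (delta_mx j 0); rewrite colE. Qed.

Lemma colspan_mulmx t s s' (A : 'M[R]_(t, s')) (B : 'M[R]_(t, s)) :
  (forall j, colspan A (col j B)) -> exists Z, B = A *m Z.
Proof.
move=> spanB; have [z zE] := fin_all_exists spanB.
exists (\matrix_(k, j) z j k 0); apply/matrixP => i j.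
have := congr1 (fun M : 'cV[R]_t => M i 0) (zE j); rewrite !mxE => ->.
by apply: eq_bigr => k _; rewrite mxE.
Qed.

Lemma ker_in_maxideal_le t s s' (B : 'M[R]_(t, s)) (A : 'M[R]_(t, s')) :
  ker_in_maxideal B -> (forall v, colspan B v <-> colspan A v) -> (s <= s')%N.
Proof.
move=> Bmin sameSpan.
have [Z BE] : exists Z, B = A *m Z by apply: colspan_mulmx => j; apply/sameSpan/colspan_col.
have [Y AE] : exists Y, A = B *m Y by apply: colspan_mulmx => j; apply/sameSpan/colspan_col.
(* B (1 - Y Z) = 0, so Y Z = 1 modulo the variables. *)
have : map_mx (mcoeff 0) (1%:M - Y *m Z) = 0.
  apply/matrixP => j j'; rewrite mxE [RHS]mxE.
  have /Bmin/(_ j) : B *m col j' (1%:M - Y *m Z) = 0.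
    by rewrite colE mulmxA mulmxBr mulmx1 mulmxA -AE -BE subrr mul0mx.
  by rewrite mxE.
rewrite map_mxB map_mx1 map_mxM => /eqP; rewrite subr_eq0 => /eqP YZ1.
by rewrite -[s](mxrank1 K) YZ1 mulmx_max_rank.
Qed.

Section GradedKernel.
Variables (t s : nat) (rdeg : 'I_t -> mon) (cdeg : 'I_s -> mon) (B : 'M[R]_(t, s)).
Hypothesis B_graded : mx_graded rdeg cdeg B.

(* The component of c of multidegree cdeg j, when the k-th basis vector has
   multidegree cdeg k. *)
Definition graded_part (c : 'cV[R]_s) j : 'cV[R]_s :=
  \col_k (('X_[cdeg k] * c k 0)@_(cdeg j) *: 'X_[cdeg j - cdeg k]).

Lemma mulX_graded_part c j k :
  'X_[cdeg k] * graded_part c j k 0 = ('X_[cdeg k] * c k 0)@_(cdeg j) *: 'X_[cdeg j].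
Proof.
rewrite mxE -scalerAr; have [le_kj|] := boolP (cdeg k <= cdeg j)%MM.
  by rewrite mulX_subm.
by rewrite mcoeffXM => /negbTE ->; rewrite !scale0r.
Qed.

Lemma graded_part_ker c j : B *m c = 0 -> B *m graded_part c j = 0.
Proof.
have [mu Bmu] := B_graded; move=> /matrixP Bc0; apply/matrixP => i z.
rewrite (ord1 z) {z}; apply: (@mulXI _ _ (rdeg i)); rewrite !mxE mulr0 mulr_sumr.
have := congr1 (fun p => ('X_[rdeg i] * p)@_(cdeg j)) (Bc0 i 0).
rewrite !mxE mulr0 mcoeff0 mulr_sumr raddf_sum /= => coef0.
under eq_bigr => k _ do rewrite mulrA Bmu -scalerAl mulX_graded_part scalerA.
rewrite -scaler_suml [X in X *: _](_ : _ = 0) ?scale0r //.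
by rewrite -[RHS]coef0; apply: eq_bigr => k _; rewrite mulrA Bmu -scalerAl mcoeffZ.
Qed.

Lemma graded_irredundant_ker_in_maxideal : mx_irredundant B -> ker_in_maxideal B.
Proof.
move=> B_irr c Bc j; apply/eqP/negPn/negP => lam_neq0.
pose lam := (c j 0)@_0.
apply: (B_irr j (delta_mx j 0 - (lam^-1)%:MP *: graded_part c j)).
  rewrite !mxE !eqxx mcoeffXM lepm_refl submm mpolyX0 -mul_mpolyC mulr1.
  by rewrite -rmorphM mulVf // subrr.
by rewrite mulmxBr -scalemxAr graded_part_ker // scaler0 subr0 colE.
Qed.

End GradedKernel.

Lemma colspan_colsub t N s (f : 'I_s -> 'I_N) (C : 'M[R]_(t, N)) v :
  colspan (colsub f C) v -> colspan C v.
Proof. by case=> d ->; exists (colsub f 1%:M *m d); rewrite mulmxA mulmx_colsub mulmx1. Qed.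

Lemma colspan_col_lift t N (C : 'M[R]_(t, N.+1)) j (d : 'cV[R]_N.+1) v :
  d j 0 = 0 -> col j C = C *m d -> colspan C v -> colspan (colsub (lift j) C) v.
Proof.
move=> dj0 /matrixP colj [e ->].
exists (\col_k (e (lift j k) 0 + e j 0 * d (lift j k) 0)).
apply/matrixP => i z; rewrite (ord1 z) !mxE (bigD1_ord j) //=.
under [RHS]eq_bigr => k _ do rewrite !mxE mulrDr.
rewrite big_split /= addrC; congr (_ + _).
have := colj i 0; rewrite !mxE (bigD1_ord j) //= dj0 mulr0 add0r => ->.
by rewrite mulr_suml; apply: eq_bigr => k _; rewrite -mulrA (mulrC (d _ 0)).
Qed.

Lemma exists_irredundant_colsub t N (C : 'M[R]_(t, N)) : exists s (f : 'I_s -> 'I_N),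
  mx_irredundant (colsub f C) /\ forall v, colspan C v <-> colspan (colsub f C) v.
Proof.
elim: N C => [|N IHN] C.
  by exists 0%N, id; rewrite [colsub _ _]mxsub_id; split => // -[].
have [[j [d [dj0 colj]]]|irr] :=
  classic (exists j (d : 'cV[R]_N.+1), d j 0 = 0 /\ col j C = C *m d).
  have [s [f [irr span]]] := IHN (colsub (lift j) C).
  exists s, (lift j \o f); rewrite colsub_comp; split => // v.
  split => [/(colspan_col_lift dj0 colj)/span | /span/colspan_colsub] //.
exists N.+1, id; rewrite [colsub _ _]mxsub_id; split => // j d dj0 colj.
by apply: irr; exists j, d.
Qed.

Lemma mx_graded_colsub t N s (f : 'I_s -> 'I_N) rdeg cdeg (C : 'M[R]_(t, N)) :
  mx_graded rdeg cdeg C -> mx_graded rdeg (cdeg \o f) (colsub f C).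
Proof. by case=> mu Cmu; exists (fun i j => mu i (f j)) => i j; rewrite mxE Cmu. Qed.

Lemma graded_kernel_min_colsub t N (g : 'rV[R]_t) (C : 'M[R]_(t, N)) rdeg cdeg :
  mx_graded rdeg cdeg C -> image_is_kernel g C ->
  exists s (f : 'I_s -> 'I_N), image_is_kernel g (colsub f C) /\
    forall s' (A : 'M[R]_(t, s')), image_is_kernel g A -> (s <= s')%N.
Proof.
move=> Cgr Cker; have [s [f [irr span]]] := exists_irredundant_colsub C.
have fCker : image_is_kernel g (colsub f C).
  by move=> v; split => [/Cker/span | /span/Cker].
exists s, f; split => // s' A Aker.
apply: (ker_in_maxideal_le (B := colsub f C)).
  exact: graded_irredundant_ker_in_maxideal (mx_graded_colsub f Cgr) irr.
by move=> v; split => [/fCker/Aker | /Aker/fCker].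
Qed.

Lemma psi_onto_colspan (I : ideal_pred K n) t (g : 'rV[R]_t) (v : 'cV[R]_1) :
  psi_onto I g -> colspan g v <-> I (v 0 0).
Proof.
move=> gI; split => [[d ->]|/gI[d vE]]; first by apply/gI; exists d.
by exists d; apply/matrixP => i j; rewrite !ord1.
Qed.

Lemma psi_onto_min (I : ideal_pred K n) t (g : 'rV[R]_t) :
  psi_onto I g -> ker_in_maxideal g ->
  forall t' (g' : 'rV[R]_t'), psi_onto I g' -> (t <= t')%N.
Proof.
move=> gI gmin t' g' g'I; apply: (ker_in_maxideal_le (A := g') gmin) => v.
by rewrite (psi_onto_colspan v gI) (psi_onto_colspan v g'I).
Qed.

End MinimalColumns.

Lemma sum_indicator (T : finType) (R : pzRingType) (V : lmodType R) (a : T) (F : T -> V) :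
  \sum_i (a == i)%:R *: F i = F a.
Proof.
rewrite (bigD1 a) //= eqxx scale1r big1 ?addr0 // => i.
by rewrite eq_sym => /negbTE ->; rewrite scale0r.
Qed.

Section TaylorPresentation.
Variables (K : fieldType) (n t : nat) (w : 'I_t -> 'X_{1..n}).
Local Notation R := {mpoly K[n]}.
Local Notation mon := 'X_{1..n}.

Definition monrow : 'rV[R]_t := \row_i 'X_[w i].

Definition tlcm a b := mlcm (w a) (w b).

Definition taylor_syz (a b i : 'I_t) : R :=
  ((i == a)%:R : K) *: 'X_[tlcm a b - w a] - ((i == b)%:R : K) *: 'X_[tlcm a b - w b].

Definition taylor_mx : 'M[R]_(t, #|{: 'I_t * 'I_t}|) :=
  \matrix_(i, j) taylor_syz (enum_val j).1 (enum_val j).2 i.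

Lemma mulX_taylor_syz a b i :
  'X_[w i] * taylor_syz a b i = ((i == a)%:R - (i == b)%:R : K) *: 'X_[tlcm a b].
Proof.
have mulX c m : (w c <= m)%MM ->
    ((i == c)%:R : K) *: ('X_[w i] * 'X_[m - w c]) = (i == c)%:R *: 'X_[m].
  by case: eqP => [-> /mulX_subm ->|_ _]; rewrite ?scale0r.
by rewrite mulrBr -!scalerAr !mulX ?lem_mlcml ?lem_mlcmr // scalerBl.
Qed.

Lemma taylor_mx_graded :
  mx_graded w (fun j => tlcm (enum_val j).1 (enum_val j).2) taylor_mx.
Proof. by eexists => i j; rewrite mxE mulX_taylor_syz. Qed.

Lemma monrow_taylor_mx : monrow *m taylor_mx = 0.
Proof.
apply/matrixP => z j; rewrite !mxE.
under eq_bigr => i _ do rewrite !mxE mulX_taylor_syz scalerBl ![i == _]eq_sym.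
by rewrite sumrB !sum_indicator subrr.
Qed.

Lemma taylor_mx_mul (D : 'I_t -> 'I_t -> R) i :
  (taylor_mx *m \col_j D (enum_val j).1 (enum_val j).2) i 0 =
  \sum_b 'X_[tlcm i b - w i] * D i b - \sum_a 'X_[tlcm a i - w i] * D a i.
Proof.
rewrite !mxE; transitivity (\sum_(p in {: 'I_t * 'I_t}) taylor_syz p.1 p.2 i * D p.1 p.2).
  by rewrite [RHS]big_enum_val; apply: eq_bigr => j _; rewrite !mxE.
rewrite -(pair_big xpredT xpredT (fun a b => taylor_syz a b i * D a b)) /=.
under eq_bigr => a _ do under eq_bigr => b _ do rewrite mulrBl -!scalerAl.
under eq_bigr => a _ do rewrite sumrB.
rewrite sumrB; congr (_ - _); last by apply: eq_bigr => a _; rewrite sum_indicator.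
rewrite (eq_bigr (fun a => (i == a)%:R *: \sum_b 'X_[tlcm a b - w a] * D a b)).
  by rewrite sum_indicator.
by move=> a _; rewrite scaler_sumr.
Qed.

Section TaylorKernel.
Variables (a0 : 'I_t) (v : 'cV[R]_t).

Definition divisor_index (x : mon) : 'I_t := odflt a0 [pick i | (w i <= x)%MM].

Lemma divisor_index_le a x : (w a <= x)%MM -> (w (divisor_index x) <= x)%MM.
Proof. by rewrite /divisor_index; case: pickP => [i //|none]; rewrite none. Qed.

Lemma tlcm_le_divisor a g : (tlcm a (divisor_index (w a + g)) <= w a + g)%MM.
Proof. by rewrite lem_mlcm lem_addr (divisor_index_le (lem_addr _ _)). Qed.

(* The term c x^g e_a of v equals x^(w_a + g - lcm) times the syzygy of (a, b), for
   b = divisor_index (w_a + g), plus c x^(w_a + g - w_b) e_b; these remainders depend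
   only on the monomial w_a + g and cancel out because monrow *m v = 0. *)
Definition taylor_coef a b : R := \sum_(g <- msupp (v a 0))
  (divisor_index (w a + g) == b)%:R *: ((v a 0)@_g *: 'X_[w a + g - tlcm a b]).

Lemma taylor_coef_row i : \sum_b 'X_[tlcm i b - w i] * taylor_coef i b = v i 0.
Proof.
have term b g : 'X_[tlcm i b - w i] *
    ((divisor_index (w i + g) == b)%:R *: ((v i 0)@_g *: 'X_[w i + g - tlcm i b])) =
    (divisor_index (w i + g) == b)%:R *: ((v i 0)@_g *: 'X_[g]).
  case: eqP => [<-|_]; last by rewrite !scale0r mulr0.
  by rewrite -!scalerAr -mpolyXD submDsub ?lem_mlcml ?tlcm_le_divisor // addmKl.
under eq_bigr => b _ do (rewrite mulr_sumr; under eq_bigr => g _ do rewrite term).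
by rewrite exchange_big /= [RHS]mpolyE; apply: eq_bigr => g _; rewrite sum_indicator.
Qed.

Hypothesis v_ker : monrow *m v = 0.

Lemma taylor_coef_col i : \sum_a 'X_[tlcm a i - w i] * taylor_coef a i = 0.
Proof.
apply: (@mulXI _ _ (w i)); rewrite mulr0 mulr_sumr.
have term a g : 'X_[w i] * ('X_[tlcm a i - w i] *
    ((divisor_index (w a + g) == i)%:R *: ((v a 0)@_g *: 'X_[w a + g - tlcm a i]))) =
    (divisor_index (w a + g) == i)%:R *: ((v a 0)@_g *: 'X_[w a + g]).
  case: eqP => [ei|_]; last by rewrite !scale0r !mulr0.
  by rewrite mulrA mulX_subm ?lem_mlcmr // -!scalerAr mulX_subm // -ei tlcm_le_divisor.
under eq_bigr => a _ do (rewrite !mulr_sumr; under eq_bigr => g _ do rewrite term).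
apply/mpolyP => m; rewrite mcoeff0 raddf_sum /=.
have coef_ker : \sum_a ('X_[w a] * v a 0)@_m = 0.
  move: v_ker => /matrixP/(_ 0 0); rewrite !mxE => /(congr1 (mcoeff m)).
  rewrite mcoeff0 raddf_sum => sum0; rewrite -[RHS]sum0.
  by apply: eq_bigr => a _; rewrite mxE.
transitivity ((divisor_index m == i)%:R * \sum_a ('X_[w a] * v a 0)@_m).
  rewrite mulr_sumr; apply: eq_bigr => a _; rewrite [in RHS](mpolyE (v a 0)) mulr_sumr.
  rewrite !raddf_sum mulr_sumr /=; apply: eq_bigr => g _.
  rewrite -scalerAr -mpolyXD !mcoeffZ mcoeffX.
  by case: ((w a + g)%MM =P m) => [<-|_]; rewrite ?mulr0.
by rewrite coef_ker mulr0.
Qed.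

End TaylorKernel.

Lemma taylor_mx_ker : image_is_kernel monrow taylor_mx.
Proof.
move=> v; split => [v_ker|[d ->]]; last by rewrite mulmxA monrow_taylor_mx mul0mx.
have [a0 _|no_index] := pickP (@predT 'I_t); last first.
  by exists 0; apply/matrixP => i; have := no_index i.
exists (\col_j taylor_coef a0 v (enum_val j).1 (enum_val j).2).
apply/matrixP => i z; rewrite (ord1 z) taylor_mx_mul taylor_coef_row.
by rewrite taylor_coef_col // subr0.
Qed.

Lemma monrow_ker_in_maxideal :
  (forall i j, (w i <= w j)%MM -> i = j) -> ker_in_maxideal monrow.
Proof.
move=> w_anti c /matrixP/(_ 0 0) c0 j.
have := congr1 (mcoeff (w j)) c0; rewrite !mxE mcoeff0 raddf_sum /= (bigD1 j) //=.
rewrite big1 => [|i ij]; first by rewrite addr0 mxE mcoeffXM lepm_refl submm.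
by rewrite mxE mcoeffXM; case: ifP => // /w_anti ij'; rewrite ij' eqxx in ij.
Qed.

Lemma mideal_taylor_mx (T : seq mon) :
  (forall a b, a != b -> mideal T ('X_[tlcm a b - w a] : R)) ->
  forall i j, mideal T (taylor_mx i j).
Proof.
move=> lcm_in i j; rewrite mxE /taylor_syz.
case: (eqVneq (enum_val j).1 (enum_val j).2) => [<-|ab].
  by rewrite subrr; apply: mideal0.
apply: midealB; rewrite -mul_mpolyC; apply: midealMl; first exact: lcm_in.
by rewrite /tlcm mlcmC; apply: lcm_in; rewrite eq_sym.
Qed.

End TaylorPresentation.

Definition mnth n (W : seq 'X_{1..n}) (i : 'I_(size W)) := nth 0%MM W i.
Arguments mnth {n} W i.

Section Presentations.
Variables (K : fieldType) (n : nat).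
Local Notation mon := 'X_{1..n}.

Lemma psi_onto_mideal (W : seq mon) : psi_onto (mideal W) (monrow K (mnth W)).
Proof.
move=> p; split => [[c ->]|[v ->]].
  by exists (\col_i c i); rewrite !mxE; apply: eq_bigr => i _; rewrite !mxE mulrC.
by exists (fun i => v i 0); rewrite !mxE; apply: eq_bigr => i _; rewrite !mxE mulrC.
Qed.

Variable W : seq mon.
Hypothesis W_uniq : uniq W.
Hypothesis W_antichain : {in W &, forall u v, (u <= v)%MM -> u = v}.

Lemma mnth_inj : injective (mnth W).
Proof. by move=> i j /eqP; rewrite nth_uniq // => /eqP/val_inj. Qed.

Lemma mnth_antichain i j : (mnth W i <= mnth W j)%MM -> i = j.
Proof. by move/W_antichain; rewrite !mem_nth // => /(_ isT isT)/mnth_inj. Qed.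

Lemma mideal_minimal_presentation : exists s (f : 'I_s -> _),
  minimal_presentation (mideal W) (monrow K (mnth W)) (colsub f (taylor_mx K (mnth W))).
Proof.
have [s [f [fker fmin]]] :=
  graded_kernel_min_colsub (taylor_mx_graded K (mnth W)) (taylor_mx_ker (K := K) (mnth W)).
exists s, f; split => //; first by split => //; apply: psi_onto_mideal.
exact: psi_onto_min (psi_onto_mideal W) (monrow_ker_in_maxideal mnth_antichain).
Qed.

End Presentations.

Section FrobeniusPowers.
Variable n : nat.
Implicit Types (S : seq 'X_{1..n}) (u v : 'X_{1..n}).

Lemma addm_mulmn_inj k u1 u2 v1 v2 :
  (forall i, v1 i < k)%N -> (forall i, v2 i < k)%N ->
  (u1 *+ k + v1 = u2 *+ k + v2)%MM -> u1 = u2 /\ v1 = v2.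
Proof.
move=> v1_lt v2_lt /mnmP e.
have ei i : (u1 i * k + v1 i = u2 i * k + v2 i)%N by have := e i; rewrite !mnmDE !mulmnE.
split; apply/mnmP => i; have k_gt0 : (0 < k)%N := leq_ltn_trans (leq0n _) (v1_lt i).
  by have := congr1 (divn^~ k) (ei i); rewrite !divnMDl // !divn_small ?addn0.
by have := congr1 (modn^~ k) (ei i); rewrite !modnMDl !modn_small.
Qed.

Variable k : nat.
Hypothesis k_gt0 : (0 < k)%N.

Lemma lem_mulmn2r u v : ((u *+ k) <= (v *+ k))%MM = (u <= v)%MM.
Proof.
by apply/mnm_lepP/mnm_lepP => uv i; have := uv i; rewrite !mulmnE leq_pmul2r.
Qed.

Lemma mulmn_inj : injective (fun u => (u *+ k)%MM).
Proof. by move=> u v e; apply: lem_anti; rewrite -lem_mulmn2r e lepm_refl. Qed.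

Lemma mfrob_uniq S : uniq (mfrob k S).
Proof. by rewrite map_inj_uniq ?Gmin_uniq //; apply: mulmn_inj. Qed.

Lemma mfrob_antichain S : {in mfrob k S &, forall x y, (x <= y)%MM -> x = y}.
Proof.
move=> _ _ /mapP[u Gu ->] /mapP[v Gv ->]; rewrite lem_mulmn2r.
by move/(Gmin_anti Gu Gv) ->.
Qed.

Lemma Gmin_mfrob S : Gmin (mfrob k S) = mfrob k S.
Proof. exact/Gmin_id/mfrob_antichain/mfrob_uniq. Qed.

End FrobeniusPowers.

Section FrobeniusConjoined.
Variables (K : fieldType) (n : nat) (S T : seq 'X_{1..n}) (d2 k : nat).
Hypothesis k_gt0 : (0 < k)%N.
Hypothesis degT : forall v, v \in Gmin T -> mdeg v = d2.
Hypothesis powers_in_J : forall (i : 'I_n) u, u \in Gmin S -> (0 < u i)%N ->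
  mideal T ('X_i ^+ k.-1 : {mpoly K[n]}).

Lemma Gmin_exponents_lt u i : u \in Gmin S -> (0 < u i)%N ->
  forall v, v \in Gmin T -> forall j, (v j < k)%N.
Proof.
move=> Gu ui v Gv j; have := powers_in_J Gu ui.
rewrite mpolyXn => /mideal_mpolyX[t0 Tt0 t0_le]; have [v0 Gv0 v0_le] := Gmin_cover Tt0.
have : (d2 <= k.-1)%N.
  by rewrite -(degT Gv0) -[k.-1]mul1n -(mdeg1 i) -mdegMn mdeg_lem // (lepm_trans v0_le).
by have := mnm_le_mdeg v j; rewrite degT //; lia.
Qed.

Lemma mfrob_sum_inj w1 w2 v1 v2 :
  w1 \in Gmin (mfrob k S) -> w2 \in Gmin (mfrob k S) -> v1 \in Gmin T -> v2 \in Gmin T ->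
  (w1 + v1 = w2 + v2)%MM -> w1 = w2 /\ v1 = v2.
Proof.
rewrite Gmin_mfrob // => /mapP[u1 Gu1 ->] /mapP[u2 Gu2 ->] Gv1 Gv2.
have [/andP[/eqP-> /eqP->] /addmI -> //|] := boolP ((u1 == 0%MM) && (u2 == 0%MM)).
rewrite negb_and => nz; have [u Gu /mnm_neq0P[j uj]] : exists2 u, u \in Gmin S & u != 0%MM.
  by case/orP: nz => nz; [exists u1 | exists u2].
have lt_k := Gmin_exponents_lt Gu uj.
by move/(addm_mulmn_inj (lt_k _ Gv1) (lt_k _ Gv2)) => [-> ->].
Qed.

Lemma mfrob_lcm_in_J x y : x \in mfrob k S -> y \in mfrob k S -> x != y ->
  mideal T ('X_[mlcm x y - x] : {mpoly K[n]}).
Proof.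
move=> /mapP[ux Gux ->] /mapP[uy Guy ->] nxy.
have [j lt_j] : exists j, (ux j < uy j)%N.
  have : ~~ (uy <= ux)%MM by apply: contra nxy => /(Gmin_anti Guy Gux) ->.
  by rewrite /lem negb_forall => /existsP[j]; rewrite -ltnNge; exists j.
apply: (mideal_lem (u := (U_(j) *+ k.-1)%MM)).
  by rewrite -mpolyXn; apply: (powers_in_J Guy); apply: leq_ltn_trans lt_j.
apply/mnm_lepP => i; rewrite mulmnE mnm1E mnmBE mnmE !mulmnE.
case: eqP => [<-|_]; last by rewrite mul0n.
rewrite mul1n (maxn_idPr (ltnW _)) ?ltn_pmul2r // -mulnBl.
by apply: leq_trans (leq_pred k) (leq_pmull _ _); rewrite subn_gt0.
Qed.

End FrobeniusConjoined.

Theorem lemma2p5 (K : fieldType) (n : nat) (S T : seq 'X_{1..n})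
    (d1 d2 k : nat) :
  (forall u, u \in Gmin S -> mdeg u = d1) ->
  (forall u, u \in Gmin T -> mdeg u = d2) ->
  (1 < k)%N ->
  (* (x_1^(k-1), ..., x_m^(k-1)) is contained in J, where
     m = max { j | x_j divides some element of G(I) } *)
  (forall i : 'I_n,
     (exists (j : 'I_n) (u : 'X_{1..n}),
        (i <= j)%N /\ u \in Gmin S /\ (0 < u j)%N) ->
     mideal T ('X_i ^+ (k.-1) : {mpoly K[n]})) ->
  conjoined K (mfrob k S) T.
Proof.
move=> degS degT k_gt1 powers_in_ideal.
have k_gt0 : (0 < k)%N by apply: ltnW.
have powers_in_J i u : u \in Gmin S -> (0 < u i)%N -> mideal T ('X_i ^+ k.-1 : {mpoly K[n]}).
  by move=> Gu ui; apply: powers_in_ideal; exists i, u.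
split.
  apply: (size_Gmin_mprod (d1 := d1 * k) _ degT (mfrob_sum_inj k_gt0 degT powers_in_J)).
  by move=> x; rewrite Gmin_mfrob // => /mapP[u Gu ->]; rewrite mdegMn degS.
have [s [f pres]] :=
  mideal_minimal_presentation K (mfrob_uniq k_gt0 S) (mfrob_antichain k_gt0 (S := S)).
do 4!eexists; split; first exact: pres.
move=> i j; rewrite mxE; apply: mideal_taylor_mx => a b ab.
rewrite /tlcm; apply: (mfrob_lcm_in_J k_gt0 powers_in_J); rewrite ?mem_nth //.
by apply: contra ab => /eqP/(mnth_inj (mfrob_uniq k_gt0 S)) ->.
Qed.
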